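(* Let $n\ge2$ and $W=(w_{ij},\ 1\le j<i\le n)\in(\mathbb{R}_{>0})^{n(n-1)/2}$, and let $T^\triangle_n(W)=(t_{ij},\ 1\le j<i\le n)$. Then the map $(\log w_{ij},\ 1\le j<i\le n)\mapsto(\log t_{ij},\ 1\le j<i\le n)$ has Jacobian $\pm1$.
   Context: Triangular arrays are $X=(x_{ij},\ 1\le j<i\le n)$ of positive reals. Local maps: for $i\ge3$, $l_{i1}$ replaces $x_{i1}$ by $x_{i-1,1}x_{i1}$; for $2\le j$ with $j+1<i$, $l_{ij}$ replaces $(x_{i-1,j-1},x_{i-1,j},x_{i,j-1},x_{ij})=(a,b,c,d)$ by $(bc/(ab+ac),b,c,d(b+c))$, other entries unchanged. For $1\le j\le n-2$, $\rho^{\triangle,n}_j=l_{n-j+1,1}\circ l_{n-j+2,2}\circ\cdots\circ l_{n-1,j-1}\circ l_{nj}$. $r^\triangle_{n,n-1}$ replaces $x_{n,n-1}$ by $1/x_{n,n-1}$. With conventions $x_{i0}=1$, $x_{n+1,n-1}=1$: for $k=0,\dots,\lfloor n/2\rfloor-1$, $b^{\triangle,n}_{n-2k,n-2k-1}$ replaces $x_{n-2k,n-2k-1}$ by $x_{n-2k+1,n-2k-1}x_{n-2k,n-2k-2}/x_{n-2k,n-2k-1}$; for $k=1,\dots,\lfloor(n-1)/2\rfloor$, $b^{\triangle,n}_{n-2k+1,n-2k}$ is the identity. $\rho^{\triangle,n}_{n-1}=b^{\triangle,n}_{2,1}\circ\cdots\circ b^{\triangle,n}_{n,n-1}\circ r^\triangle_{n,n-1}$,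 $R^\triangle_n=\rho^{\triangle,n}_{n-1}\circ\cdots\circ\rho^{\triangle,n}_1$. $T^\triangle_2(x_{21})=x_{21}$ and for $n\ge3$, $T^\triangle_n(X_n)=R^\triangle_n$ applied to the array whose first $n-1$ rows are $T^\triangle_{n-1}(x_{ij},\ 1\le j<i\le n-1)$ and whose last row is $(x_{n1},\dots,x_{n,n-1})$. *)

From HB Require Import structures.
From mathcomp Require Import all_boot all_order all_algebra.
From mathcomp Require Import all_classical all_reals all_analysis.
Set Implicit Arguments. Unset Strict Implicit. Unset Printing Implicit Defensive.
Import Order.TTheory GRing.Theory Num.Theory.
Local Open Scope ring_scope.

Section Triangular.
Variable R : realType.

(* A triangular array (x_ij, 1 <= j < i <= n) is represented by a total
   function nat -> nat -> R; only the entries with 1 <= j < i <= n matter. *)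
Definition tarray := nat -> nat -> R.

Definition upd (X : tarray) (i j : nat) (v : R) : tarray :=
  fun a b => if (a == i) && (b == j) then v else X a b.

Definition lmap (i j : nat) (X : tarray) : tarray :=
  if j == 1%N then upd X i 1 (X i.-1 1%N * X i 1%N)
  else
    let a := X i.-1 j.-1 in let b := X i.-1 j in
    let c := X i j.-1 in let d := X i j in
    upd (upd X i.-1 j.-1 (b * c / (a * b + a * c))) i j (d * (b + c)).

Definition rho (n j : nat) (X : tarray) : tarray :=
  foldr (fun k Y => lmap (n - j + k) k Y) X (iota 1 j).

Definition rinv (n : nat) (X : tarray) : tarray :=
  upd X n n.-1 (X n n.-1)^-1.

Definition getc (n : nat) (X : tarray) (i j : nat) : R :=
  if j == 0%N then 1
  else if (i == n.+1) && (j == n.-1) then 1 else X i j.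

Definition bmap (n m : nat) (X : tarray) : tarray :=
  if odd (n - m) then X
  else upd X m m.-1 (getc n X m.+1 m.-1 * getc n X m (m - 2) / X m m.-1).

Definition rho_last (n : nat) (X : tarray) : tarray :=
  foldr (fun m Y => bmap n m Y) (rinv n X) (iota 2 n.-1).

Definition Rtri (n : nat) (X : tarray) : tarray :=
  rho_last n (foldl (fun Y j => rho n j Y) X (iota 1 (n - 2))).

Fixpoint Ttri (n : nat) (X : tarray) : tarray :=
  match n with
  | S ((S (S _)) as m) =>
      Rtri m.+1 (fun i j => if i == m.+1 then X i j else Ttri m X i j)
  | _ => X
  end.

Definition tpairs (n : nat) : seq (nat * nat) :=
  flatten [seq [seq (i, j) | j <- iota 1 i.-1] | i <- iota 2 n.-1].

Definition tdim (n : nat) : nat := size (tpairs n).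

Definition exp_array (n : nat) (u : 'rV[R]_(tdim n)) : tarray :=
  fun i j => match @insub nat (fun k => k < tdim n)%N 'I_(tdim n) (index (i, j) (tpairs n)) with
             | Some k => expR (u ord0 k)
             | None => 1
             end.

Definition log_vec (n : nat) (X : tarray) : 'rV[R]_(tdim n) :=
  \row_(k < tdim n) ln (X (nth (0, 0) (tpairs n) k).1 (nth (0, 0) (tpairs n) k).2).

Definition logT (n : nat) (u : 'rV[R]_(tdim n)) : 'rV[R]_(tdim n) :=
  @log_vec n (Ttri n (@exp_array n u)).

End Triangular.

From HB Require Import structures.
From mathcomp Require Import all_boot all_order all_algebra.
From mathcomp Require Import all_classical all_reals all_analysis.
From mathcomp Require Import zify ring.
Import Order.TTheory GRing.Theory Num.Theory.
Import numFieldNormedType.Exports.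
Local Open Scope ring_scope.
Set Implicit Arguments. Unset Strict Implicit.

(* In logarithmic coordinates every local map [l_ij], [r] and [b] is a shear:
   it replaces one coordinate [v_k] by [+-v_k + h v] with [h] smooth and
   independent of [v_k]; e.g. [l_ij] sends [log a] to
   [-log a + log b + log c - log (e^(log b) + e^(log c))].  The Jacobian matrix
   of a shear is the identity except in column [k], where the diagonal entry is
   [+-1], so its determinant is [+-1], and the chain rule propagates this to
   compositions.  Since [R_n] only touches rows [<= n], [T_n = R_n o T_(n-1)]
   is such a composition. *)

Section Shear.
Variables (R : numFieldType) (N : nat).
Notation V := 'rV[R]_N.
Implicit Types (k : 'I_N) (s : R) (h : V -> R) (f g : V -> V) (u v w : V).

(* Declared at type [V] so that unification finds the normed-module structure
   of row vectors; [delta_mx 0 k] alone is typed over the underlying semiring. *)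
Definition unit_row k : V := delta_mx 0 k.

Definition free_of k h :=
  (forall v, differentiable h v) /\ (forall v t, h (t *: unit_row k + v) = h v).

Definition shear k s h v : V := v + ((s - 1) * v 0 k + h v) *: unit_row k.

Definition unimodular f := forall u, differentiable f u /\
  (\det (jacobian f u) = 1 \/ \det (jacobian f u) = -1).

Lemma mul_pm1 (a b : R) : a = 1 \/ a = -1 -> b = 1 \/ b = -1 -> a * b = 1 \/ a * b = -1.
Proof. by case=> ->; case=> ->; rewrite ?mulN1r ?mul1r ?opprK; [left|right|right|left]. Qed.

Lemma det_delta_row (A : 'M[R]_N) k s :
  (forall j, A k j = s * (k == j)%:R) ->
  (forall i j, i != k -> j != k -> A i j = (i == j)%:R) ->
  \det A = s.
Proof.
move=> Ak Aid; rewrite (expand_det_row _ k) (bigD1 k) //= big1 => [|j /negbTE jk]; last first.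
  by rewrite Ak eq_sym jk mulr0 mul0r.
rewrite addr0 Ak eqxx mulr1 /cofactor -signr_odd addnn odd_double expr0 mul1r.
suff -> : row' k (col' k A) = 1%:M by rewrite det1 mulr1.
apply/matrixP => i j; rewrite !mxE Aid ?(inj_eq (@lift_inj _ k)) //;
  by rewrite eq_sym neq_lift.
Qed.

Lemma mul_rV_jacobian f u v : v *m jacobian f u = 'd f u v.
Proof. exact: mul_rV_lin1. Qed.

Lemma diff_id u : 'd id u = id :> (V -> V).
Proof. exact: (@diff_val _ _ _ _ _ _ _ (is_diff_id u)). Qed.

Lemma diff_coord k u : 'd (fun v : V => v 0 k) u = (fun v : V => v 0 k) :> (V -> R).
Proof.
have coord_lin : linear (fun v : V => v 0 k) by move=> a v w; rewrite !mxE.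
pose c : {linear V -> R} := HB.pack (fun v : V => v 0 k) (GRing.isLinear.Build _ _ _ _ _ coord_lin).
by rewrite (_ : (fun _ => _) = c) // diff_lin //; exact: coord_continuous.
Qed.

(* The chain rule is applied through [congr1]: rewriting with [diff_comp], or
   matching two distinct Jacobians, makes the unifier unfold [diff]. *)
Lemma jacobian_comp f g u : differentiable g u -> differentiable f (g u) ->
  jacobian (f \o g) u = jacobian g u *m jacobian f (g u).
Proof.
move=> dg df; apply/row_matrixP => i; rewrite !rowE mulmxA.
rewrite [LHS]mul_rV_jacobian [RHS]mul_rV_jacobian [in RHS]mul_rV_jacobian.
exact: (congr1 (@^~ (delta_mx 0 i)) (diff_comp dg df)).
Qed.

Lemma unimodular_id : unimodular id.
Proof.
move=> u; split => //; left.
suff -> : jacobian id u = 1%:M by rewrite det1.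
apply/row_matrixP => i; rewrite !rowE mulmx1 [LHS]mul_rV_jacobian.
exact: (congr1 (@^~ (delta_mx 0 i)) (diff_id u)).
Qed.

Lemma unimodular_comp f g : unimodular f -> unimodular g -> unimodular (f \o g).
Proof.
move=> Uf Ug u; have [dg Jg] := Ug u; have [df Jf] := Uf (g u).
split; first exact: differentiable_comp.
rewrite (jacobian_comp dg df) det_mulmx; exact: (mul_pm1 Jg Jf).
Qed.

Lemma diff_shear k s h u : free_of k h ->
  differentiable (shear k s h) u /\
  forall w, 'd (shear k s h) u w = w + ((s - 1) * w 0 k + 'd h u w) *: unit_row k.
Proof.
move=> [dh _].
have dcoord : differentiable (fun v : V => v 0 k) u by exact: differentiable_coord.
have dscaled : differentiable ((s - 1) *: (fun v : V => v 0 k)) u by exact: differentiableZ.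
have phiE : (fun v : V => (s - 1) * v 0 k + h v) = (s - 1) *: (fun v : V => v 0 k) + h.
  by apply/funext.
have dphi : differentiable (fun v : V => (s - 1) * v 0 k + h v) u.
  by rewrite phiE; exact: differentiableD.
have dprod : differentiable (fun v : V => ((s - 1) * v 0 k + h v) *: unit_row k) u.
  exact: differentiableZl.
have shearE : shear k s h = id + (fun v : V => ((s - 1) * v 0 k + h v) *: unit_row k).
  by apply/funext.
split => [|w]; first by rewrite shearE; apply: differentiableD.
have dprodE := congr1 (@^~ w) (diffZl (unit_row k) dphi).
rewrite shearE diffD //= [X in _ + X = _]dprodE /= phiE diffD //= diffZ // diff_coord.
by congr (_ + _); exact: (congr1 (@^~ w) (diff_id u)).
Qed.

Lemma unimodular_shear k s h : s = 1 \/ s = -1 -> free_of k h -> unimodular (shear k s h).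
Proof.
move=> s1 hk u; have [dshear dshearE] := diff_shear s u hk.
split => //; suff -> : \det (jacobian (shear k s h) u) = s by [].
have dh_k : 'd h u (unit_row k) = 0.
  have [dh hk_inv] := hk; rewrite -deriveE // /derive.
  rewrite (_ : (fun t : R => _) = cst 0) ?lim_cst //.
  by apply/funext => t /=; rewrite hk_inv subrr scaler0.
have JE i j : jacobian (shear k s h) u i j
    = (j == i)%:R + ((s - 1) * (k == i)%:R + 'd h u (delta_mx 0 i)) * (j == k)%:R.
  rewrite /jacobian mxE (congr1 (fun M : V => M 0 j) (dshearE (delta_mx 0 i))).
  by rewrite /unit_row !mxE eqxx.
apply: (det_delta_row (k := k)) => [j|i j ik jk]; rewrite JE.
  rewrite -[delta_mx 0 k]/(unit_row k) dh_k eqxx mulr1 addr0 (eq_sym k j).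
  by case: (j == k); rewrite ?mulr1 ?mulr0 ?addr0 // addrC subrK.
by rewrite (negbTE jk) mulr0 addr0 eq_sym.
Qed.

End Shear.

Section FreeOf.
Variables (R : realType) (N : nat).
Notation V := 'rV[R]_N.
Implicit Types (k l : 'I_N) (h : V -> R).

Lemma free_of_cst k (c : R) : free_of k (fun _ => c).
Proof. by split => // v; exact: differentiable_cst. Qed.

Lemma free_of_coord k l : l != k -> free_of k (fun v : V => v 0 l).
Proof.
move=> lk; split => [v|v t]; first exact: differentiable_coord.
by rewrite /unit_row !mxE (negbTE lk) /= mulr0 add0r.
Qed.

Lemma free_ofD k h1 h2 : free_of k h1 -> free_of k h2 -> free_of k (fun v => h1 v + h2 v).
Proof.
move=> [d1 i1] [d2 i2]; split => [v|v t]; last by rewrite i1 i2.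
exact: (@differentiableD _ _ _ h1 h2).
Qed.

Lemma free_ofB k h1 h2 : free_of k h1 -> free_of k h2 -> free_of k (fun v => h1 v - h2 v).
Proof.
move=> [d1 i1] [d2 i2]; split => [v|v t]; last by rewrite i1 i2.
exact: (@differentiableB _ _ _ h1 h2).
Qed.

Lemma free_of_ln_expRD k h1 h2 : free_of k h1 -> free_of k h2 ->
  free_of k (fun v => ln (expR (h1 v) + expR (h2 v))).
Proof.
move=> [d1 i1] [d2 i2]; split => [v|v t]; last by rewrite i1 i2.
have dexpR (x : R) : differentiable (@expR R) x.
  by apply/derivable1_diffP; exact: derivable_expR.
have e1 : differentiable (fun v => expR (h1 v)) v := differentiable_comp (d1 v) (dexpR _).
have e2 : differentiable (fun v => expR (h2 v)) v := differentiable_comp (d2 v) (dexpR _).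
have dsum : differentiable (fun v => expR (h1 v) + expR (h2 v)) v.
  exact: (@differentiableD _ _ _ (fun v => expR (h1 v)) (fun v => expR (h2 v))).
apply: (differentiable_comp dsum); apply/derivable1_diffP.
by have [] := is_derive1_ln (addr_gt0 (expR_gt0 (h1 v)) (expR_gt0 (h2 v))).
Qed.

End FreeOf.

Lemma mem_tpairs n i j : ((i, j) \in tpairs n) = (0 < j < i)%N && (i <= n)%N.
Proof.
apply/flatten_mapP/idP => [[a]|/andP [/andP [j0 ji] iN]].
  rewrite mem_iota => /andP [a2 an] /mapP [b]; rewrite mem_iota => /andP [b1 ba] [-> ->].
  by apply/andP; split; [apply/andP; split|]; lia.
exists i; first by rewrite mem_iota; lia.
by apply/mapP; exists j => //; rewrite mem_iota; lia.
Qed.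

Lemma uniq_tpairs n : uniq (tpairs n).
Proof.
apply: allpairs_uniq_dep => [|x _|[a b] [c d] _ _ /= [-> ->]] //; exact: iota_uniq.
Qed.

Section LogCoordinates.
Variables (R : realType) (N : nat).
Notation V := 'rV[R]_(tdim N).
Notation arr := (tarray R).
Implicit Types (X : arr) (F G : arr -> arr) (k l : 'I_(tdim N)).

Definition tpair k := nth (0, 0)%N (tpairs N) k.

Definition positive X := forall p, p \in tpairs N -> 0 < X p.1 p.2.

Definition log_conj F (f : V -> V) :=
  forall X, positive X -> positive (F X) /\ log_vec N (F X) = f (log_vec N X).

Definition log_unimodular F := exists f, unimodular f /\ log_conj F f.

Lemma log_unimodular_comp F G :
  log_unimodular F -> log_unimodular G -> log_unimodular (fun X => F (G X)).
Proof.
move=> [f [Uf Ff]] [g [Ug Gg]]; exists (f \o g); split; first exact: unimodular_comp.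
by move=> X pX; have [pG eG] := Gg X pX; have [pF eF] := Ff _ pG; rewrite eF eG.
Qed.

Lemma log_unimodular_id : log_unimodular id.
Proof. by exists id; split; [exact: unimodular_id|]. Qed.

Lemma log_unimodular_eq F G :
  (forall X, positive X -> F X = G X) -> log_unimodular G -> log_unimodular F.
Proof. by move=> FG [g [Ug Gg]]; exists g; split => // X pX; rewrite FG //; exact: Gg. Qed.

Lemma log_unimodular_foldr (s : seq nat) (G : nat -> arr -> arr) :
  (forall a, a \in s -> log_unimodular (G a)) ->
  log_unimodular (fun X => foldr G X s).
Proof.
elim: s => [|a s IH] Gs /=; first exact: log_unimodular_id.
apply: (log_unimodular_comp (F := G a)); first by apply: Gs; rewrite mem_head.
by apply: IH => b bs; apply: Gs; rewrite in_cons bs orbT.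
Qed.

Lemma log_unimodular_foldl (s : seq nat) (G : nat -> arr -> arr) :
  (forall a, a \in s -> log_unimodular (G a)) ->
  log_unimodular (fun X => foldl (fun Y a => G a Y) X s).
Proof.
elim: s => [|a s IH] Gs /=; first exact: log_unimodular_id.
apply: (log_unimodular_comp (F := fun X => foldl _ X s) (G := G a)).
  by apply: IH => b bs; apply: Gs; rewrite in_cons bs orbT.
by apply: Gs; rewrite mem_head.
Qed.

Lemma tpairP p : p \in tpairs N -> {k | tpair k = p}.
Proof.
move=> pT; have lt : (index p (tpairs N) < tdim N)%N by rewrite index_mem.
by exists (Ordinal lt); rewrite /tpair nth_index.
Qed.

Lemma tpair_exists i j : (0 < j < i)%N -> (i <= N)%N -> {k : 'I_(tdim N) | tpair k = (i, j)}.
Proof. by move=> ji iN; apply: tpairP; rewrite mem_tpairs ji. Qed.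

Lemma tpair_inj : injective tpair.
Proof. by move=> k l /eqP; rewrite nth_uniq ?uniq_tpairs // => /eqP /val_inj. Qed.

Lemma tpair_mem k : tpair k \in tpairs N.
Proof. exact: mem_nth. Qed.

Lemma log_vecE X k : log_vec N X 0 k = ln (X (tpair k).1 (tpair k).2).
Proof. by rewrite mxE. Qed.

Definition log_free k (e : arr -> R) := exists h, free_of k h /\
  forall X, positive X -> 0 < e X /\ ln (e X) = h (log_vec N X).

Lemma log_free1 k : log_free k (fun _ => 1).
Proof. by exists (fun _ => 0); split => [|X _]; [exact: free_of_cst|rewrite ln1]. Qed.

Lemma log_free_gt0 k e X : log_free k e -> positive X -> 0 < e X.
Proof. by move=> [h [_ /(_ X) eE]] /eE []. Qed.

Lemma log_free_entry k a b i j : tpair k = (a, b) ->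
  (0 < j < i)%N -> (i <= N)%N -> (i != a) || (j != b) -> log_free k (fun X => X i j).
Proof.
move=> kab ji iN ijab; have [l lij] := tpair_exists ji iN.
exists (fun v : V => v 0 l); split => [|X pX].
  apply: free_of_coord; apply/eqP => lk.
  by move: lij ijab; rewrite lk kab => -[-> ->]; rewrite !eqxx.
rewrite log_vecE lij; split => //; apply: (pX (i, j)).
by rewrite -lij tpair_mem.
Qed.

Lemma log_freeM k e1 e2 : log_free k e1 -> log_free k e2 -> log_free k (fun X => e1 X * e2 X).
Proof.
move=> [h1 [H1 E1]] [h2 [H2 E2]]; exists (fun v => h1 v + h2 v); split => [|X pX].
  exact: free_ofD.
have [p1 <-] := E1 X pX; have [p2 <-] := E2 X pX.
by rewrite mulr_gt0 // lnM.
Qed.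

Lemma log_free_div k e1 e2 : log_free k e1 -> log_free k e2 -> log_free k (fun X => e1 X / e2 X).
Proof.
move=> [h1 [H1 E1]] [h2 [H2 E2]]; exists (fun v => h1 v - h2 v); split => [|X pX].
  exact: free_ofB.
have [p1 <-] := E1 X pX; have [p2 <-] := E2 X pX.
by rewrite divr_gt0 // ln_div.
Qed.

Lemma log_freeD k e1 e2 : log_free k e1 -> log_free k e2 -> log_free k (fun X => e1 X + e2 X).
Proof.
move=> [h1 [H1 E1]] [h2 [H2 E2]].
exists (fun v => ln (expR (h1 v) + expR (h2 v))); split => [|X pX].
  exact: free_of_ln_expRD.
have [p1 <-] := E1 X pX; have [p2 <-] := E2 X pX.
by rewrite addr_gt0 // !lnK.
Qed.

Lemma log_unimodular_upd k i j s e g : tpair k = (i, j) -> s = 1 \/ s = -1 -> log_free k g ->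
  (forall X, positive X -> 0 < e X /\ ln (e X) = s * ln (X i j) + ln (g X)) ->
  log_unimodular (fun X => upd X i j (e X)).
Proof.
move=> kij s1 [h [hk gE]] eE; exists (shear k s h); split; first exact: unimodular_shear.
move=> X pX; have [e0 lneE] := eE X pX; have [g0 lngE] := gE X pX; split.
  by move=> q qT; rewrite /upd; case: ifP => // _; exact: pX.
apply/rowP => l; rewrite /shear /unit_row !mxE /upd.
have [->|lk] := eqVneq l k.
  by rewrite /tpair in kij; rewrite kij !eqxx /= lneE lngE mulr1; ring.
have lij : tpair l != (i, j) by rewrite -kij (inj_eq tpair_inj).
rewrite (_ : _ && _ = false); last exact: negbTE lij.
by rewrite andbF mulr0 addr0.
Qed.

Lemma log_unimodular_upd_mul k i j (g : arr -> R) : tpair k = (i, j) -> log_free k g ->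
  log_unimodular (fun X => upd X i j (X i j * g X)).
Proof.
move=> kij gk; apply: (log_unimodular_upd (s := 1) kij _ gk) => [|X pX]; first by left.
have xij : 0 < X i j by have := pX _ (tpair_mem k); rewrite kij.
have g0 := log_free_gt0 gk pX.
by rewrite mulr_gt0 // lnM ?posrE // mul1r.
Qed.

Lemma log_unimodular_upd_div k i j (g : arr -> R) : tpair k = (i, j) -> log_free k g ->
  log_unimodular (fun X => upd X i j (g X / X i j)).
Proof.
move=> kij gk; apply: (log_unimodular_upd (s := -1) kij _ gk) => [|X pX]; first by right.
have xij : 0 < X i j by have := pX _ (tpair_mem k); rewrite kij.
have g0 := log_free_gt0 gk pX.
by rewrite divr_gt0 // ln_div ?posrE // mulN1r addrC.
Qed.

Lemma log_free_getc k a b n i j : tpair k = (a, b) ->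
  [|| j == 0%N, (i == n.+1) && (j == n.-1) |
      [&& (0 < j < i)%N, (i <= N)%N & (i != a) || (j != b)]] ->
  log_free k (fun X => getc n X i j).
Proof.
move=> kab; rewrite /getc.
case: (j == 0%N) => [_|]; first exact: log_free1.
case: ((i == n.+1) && (j == n.-1)) => [_|/= /and3P [ji iN ijab]]; first exact: log_free1.
exact: (log_free_entry kab).
Qed.

Lemma log_unimodular_lmap1 i : (2 < i <= N)%N -> log_unimodular (lmap i 1).
Proof.
move=> iN; have [k ki] := @tpair_exists i 1 ltac:(lia) ltac:(lia).
apply: (log_unimodular_eq (G := fun X => upd X i 1 (X i 1%N * X i.-1 1%N))).
  by move=> X _; rewrite /lmap /= mulrC.
by apply: (log_unimodular_upd_mul ki); apply: (log_free_entry ki); lia.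
Qed.

Lemma lmapE i j : (1 < j)%N -> (0 < i)%N -> @lmap R i j =
  (fun Y => upd Y i.-1 j.-1 (Y i.-1 j * Y i j.-1 / (Y i.-1 j + Y i j.-1) / Y i.-1 j.-1))
  \o (fun X => upd X i j (X i j * (X i.-1 j + X i j.-1))).
Proof.
move=> j1 i0; apply/funext => X; rewrite /lmap ifN_eq; last by apply/eqP; lia.
have pi_i : (i.-1 == i) = false by apply/eqP; lia.
have i_pi : (i == i.-1) = false by apply/eqP; lia.
have pj_j : (j.-1 == j) = false by apply/eqP; lia.
apply/funext => a; apply/funext => b; rewrite /upd /= pi_i pj_j eqxx !andbF /=.
have [-> /=|_] := eqVneq a i; first by rewrite i_pi; case: (b == j).
case: ((a == i.-1) && (b == j.-1)) => //.
by rewrite -mulrDr invfM; ring.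
Qed.

Lemma log_unimodular_lmap i j : (0 < j)%N -> (j.+1 < i <= N)%N -> log_unimodular (lmap i j).
Proof.
move=> j0 ijN; have [->|j1] := eqVneq j 1%N; first by apply: log_unimodular_lmap1; lia.
have [kd kdE] := @tpair_exists i j ltac:(lia) ltac:(lia).
have [ka kaE] := @tpair_exists i.-1 j.-1 ltac:(lia) ltac:(lia).
rewrite lmapE; [apply: log_unimodular_comp|lia|lia].
  apply: (log_unimodular_upd_div kaE).
  by apply: log_free_div; [apply: log_freeM|apply: log_freeD];
    apply: (log_free_entry kaE); lia.
apply: (log_unimodular_upd_mul kdE).
by apply: log_freeD; apply: (log_free_entry kdE); lia.
Qed.

Lemma log_unimodular_rinv n : (1 < n <= N)%N -> log_unimodular (rinv n).
Proof.
move=> nN; have [k kE] := @tpair_exists n n.-1 ltac:(lia) ltac:(lia).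
apply: (log_unimodular_eq (G := fun X => upd X n n.-1 (1 / X n n.-1))).
  by move=> X _; rewrite /rinv div1r.
by apply: (log_unimodular_upd_div kE); exact: log_free1.
Qed.

Lemma log_unimodular_bmap n m : (1 < m <= n)%N -> (n <= N)%N -> log_unimodular (bmap n m).
Proof.
move=> mn nN; rewrite /bmap; case: (odd (n - m)); first exact: log_unimodular_id.
have [k kE] := @tpair_exists m m.-1 ltac:(lia) ltac:(lia).
apply: (log_unimodular_upd_div kE).
by apply: log_freeM; apply: (log_free_getc kE); lia.
Qed.

Lemma log_unimodular_Rtri n : (2 < n <= N)%N -> log_unimodular (Rtri n).
Proof.
move=> nN; apply: (log_unimodular_comp (F := rho_last n)).
  apply: (log_unimodular_comp (F := fun X => foldr (@bmap R n) X (iota 2 n.-1))).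
    apply: log_unimodular_foldr => m; rewrite mem_iota => mn.
    by apply: log_unimodular_bmap; lia.
  by apply: log_unimodular_rinv; lia.
apply: (log_unimodular_foldl (G := rho n)) => j; rewrite mem_iota => jn.
apply: log_unimodular_foldr => i; rewrite mem_iota => ij.
by apply: log_unimodular_lmap; lia.
Qed.

End LogCoordinates.

Section FixedRows.
Variable R : realType.
Notation arr := (tarray R).

Definition fixed_above (r : nat) (F : arr -> arr) := forall X a b, (r < a)%N -> F X a b = X a b.

Lemma fixed_above_upd r i j (e : arr -> R) : (i <= r)%N -> fixed_above r (fun X => upd X i j (e X)).
Proof. by move=> ir X a b ra; rewrite /upd ifN //; apply/nandP; left; apply/eqP; lia. Qed.

Lemma fixed_above_comp r F G : fixed_above r F -> fixed_above r G -> fixed_above r (F \o G).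
Proof. by move=> hF hG X a b ra /=; rewrite hF // hG. Qed.

Lemma fixed_above_foldr r (s : seq nat) (G : nat -> arr -> arr) :
  (forall a, a \in s -> fixed_above r (G a)) -> fixed_above r (fun X => foldr G X s).
Proof.
elim: s => [|a s IH] Gs X x y rx //=.
by rewrite Gs ?mem_head // IH // => c cs; apply: Gs; rewrite in_cons cs orbT.
Qed.

Lemma fixed_above_foldl r (s : seq nat) (G : nat -> arr -> arr) :
  (forall a, a \in s -> fixed_above r (G a)) ->
  fixed_above r (fun X => foldl (fun Y a => G a Y) X s).
Proof.
elim: s => [|a s IH] Gs X x y rx //=.
by rewrite IH ?Gs ?mem_head // => c cs; apply: Gs; rewrite in_cons cs orbT.
Qed.

Lemma fixed_above_lmap r i j : (i <= r)%N -> fixed_above r (@lmap R i j).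
Proof.
move=> ir X a b ra; rewrite /lmap /upd.
have [ai ai1] : (a == i) = false /\ (a == i.-1) = false by split; apply/eqP; lia.
by case: ifP; rewrite /= ai ?ai1.
Qed.

Lemma fixed_above_Rtri n : fixed_above n (@Rtri R n).
Proof.
apply: fixed_above_comp.
  apply: (fixed_above_comp (F := fun X => foldr (@bmap R n) X (iota 2 n.-1))).
    apply: fixed_above_foldr => m; rewrite mem_iota => mn.
    rewrite /bmap; case: (odd (n - m)) => [X //|]; apply: fixed_above_upd; lia.
  exact: fixed_above_upd.
apply: fixed_above_foldl => j; rewrite mem_iota => jn.
apply: fixed_above_foldr => i; rewrite mem_iota => ij.
by apply: fixed_above_lmap; lia.
Qed.

Lemma Ttri_above m (X : arr) a b : (m < a)%N -> Ttri m X a b = X a b.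
Proof.
case: m => [|[|m]] //; elim: m a b => [|m IH] a b ma //=.
by rewrite fixed_above_Rtri // ifN_eq; [apply: IH|]; lia.
Qed.

Lemma TtriS m (X : arr) : Ttri m.+3 X = Rtri m.+3 (Ttri m.+2 X).
Proof.
congr (Rtri _ _); apply/funext => i; apply/funext => j.
by case: eqP => // ->; rewrite Ttri_above.
Qed.

End FixedRows.

Lemma log_unimodular_Ttri (R : realType) N m : (1 < m <= N)%N -> log_unimodular N (@Ttri R m).
Proof.
case: m => [|[|m]] //; elim: m => [_|m IH mN]; first exact: log_unimodular_id.
apply: (log_unimodular_eq (fun X _ => TtriS m X)).
by apply: (log_unimodular_comp (F := @Rtri R m.+3)); [apply: log_unimodular_Rtri|apply: IH]; lia.
Qed.

Lemma positive_exp_array (R : realType) N (u : 'rV[R]_(tdim N)) : positive N (exp_array u).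
Proof. by move=> p _; rewrite /exp_array; case: insubP => [k _ _|_] //; exact: expR_gt0. Qed.

Lemma log_vec_exp_array (R : realType) N (u : 'rV[R]_(tdim N)) : log_vec N (exp_array u) = u.
Proof.
apply/rowP => l; rewrite mxE /exp_array -surjective_pairing index_uniq ?uniq_tpairs //.
case: insubP => [k _ kl|]; last by rewrite ltn_ord.
by rewrite (val_inj kl) expRK.
Qed.

Theorem theorem6p2 (R : realType) (n : nat) (hn : (2 <= n)%N)
    (u : 'rV[R]_(tdim n)) :
  differentiable (@logT R n) u /\
  (\det (jacobian (@logT R n) u) = 1 \/ \det (jacobian (@logT R n) u) = -1).
Proof.
have [f [Uf Tf]] : log_unimodular n (@Ttri R n) by apply: log_unimodular_Ttri; rewrite hn leqnn.
suff -> : @logT R n = f by exact: (Uf u).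
apply/funext => v; have [_ Tv] := Tf _ (positive_exp_array v).
by rewrite /logT Tv log_vec_exp_array.
Qed.
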